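(* Let $\mathcal{A},\mathcal{B},\mathcal{C}$ be finite-dimensional complex Hilbert spaces with $\dim\mathcal{C}\geq\dim(\mathcal{A}\otimes\mathcal{B})$. Let $L$ be a subunitary operator on $\mathcal{A}\otimes\mathcal{B}$ (i.e. $\|L\ket{\varphi}\|\leq\|\ket{\varphi}\|$ for all $\ket{\varphi}$). Let $\ket{\xi}\neq 0$ and $\ket{\tau}$ be vectors in $\mathcal{A}\otimes\mathcal{B}\otimes\mathcal{C}$, and let $T\geq 1$ be an integer. Then it is possible to transform $\ket{\xi}\mapsto\ket{\tau}$ in $T$ timesteps (in the sense defined in the context) if and only if there exist positive semidefinite operators $\pi^0,\pi^1,\dots,\pi^{T-1}$ on $\mathcal{A}\otimes\mathcal{B}$ such that $\mathrm{tr}_{\mathcal{B}}\pi^{j+1}=\mathrm{tr}_{\mathcal{B}}\left(L\pi^jL^\dagger\right)$ for all $0\leq j\leq T-2$, $\mathrm{tr}_{\mathcal{B}\mathcal{C}}\ket{\xi}\bra{\xi}=\mathrm{tr}_{\mathcal{B}}\pi^0$, and $\mathrm{tr}_{\mathcal{B}\mathcal{C}}\ket{\tau}\bra{\tau}=\mathrm{tr}_{\mathcal{B}}\left(L\pi^{T-1}L^\dagger\right)$.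
   Context: A $T$-timestep algorithm consists of a choice of unitaries $U_0,U_1,\dots,U_T$ acting on $\mathcal{B}\otimes\mathcal{C}$; it applies the operator $E=(I_{\mathcal{A}}\otimes U_T)(L\otimes I_{\mathcal{C}})(I_{\mathcal{A}}\otimes U_{T-1})(L\otimes I_{\mathcal{C}})\cdots(L\otimes I_{\mathcal{C}})(I_{\mathcal{A}}\otimes U_0)$ (i.e. $L$ is applied exactly $T$ times on $\mathcal{A}\otimes\mathcal{B}$, interleaved with arbitrary unitaries on $\mathcal{B}\otimes\mathcal{C}$; the algorithm never acts directly on $\mathcal{A}$ otherwise). ''Transform $\ket{\xi}\mapsto\ket{\tau}$ in $T$ timesteps'' means there is such an algorithm with $E\ket{\xi}=\ket{\tau}$. States need not be normalized. $\mathrm{tr}_{\mathcal{B}}$, $\mathrm{tr}_{\mathcal{B}\mathcal{C}}$ denote partial traces over the indicated factors. *)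

From HB Require Import structures.
From mathcomp Require Import all_boot all_order all_algebra.
From mathcomp Require Import complex mxtens.
From mathcomp Require Import reals.
From mathcomp Require Export spectral.
Set Implicit Arguments. Unset Strict Implicit. Unset Printing Implicit Defensive.
Import Order.TTheory GRing.Theory Num.Theory Num.Def.
Local Open Scope ring_scope.
Local Open Scope complex_scope.

Section QDefs.
Variable R : realType.
Local Notation C := (R[i])%C.

Definition dag {m n} (M : 'M[C]_(m, n)) : 'M[C]_(n, m) := map_mx Num.conj (M ^T).

Definition vnorm {n} (v : 'cV[C]_n) : C := sqrtC (\sum_i `|v i 0| ^+ 2).

Definition subunitary {n} (L : 'M[C]_n) : Prop :=
  forall v : 'cV[C]_n, vnorm (L *m v) <= vnorm v.

Definition unitary {n} (U : 'M[C]_n) : Prop := U \is unitarymx.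

Definition psd {n} (P : 'M[C]_n) : Prop :=
  dag P = P /\ forall v : 'cV[C]_n, 0 <= (dag v *m P *m v) 0 0.

(* Partial trace over the second tensor factor: for M on X (x) Y
   (index (i,k) |-> i * dim Y + k, as in mxtens_index), tr_Y M on X. *)
Definition ptrace2 {m n} (M : 'M[C]_(m * n)) : 'M[C]_m :=
  \matrix_(i, j) \sum_(k < n) M (mxtens_index (i, k)) (mxtens_index (j, k)).

Definition ketbra {n} (x : 'cV[C]_n) : 'M[C]_n := x *m dag x.

Section Alg.
Variables a b c : nat.

Definition trB (M : 'M[C]_(a * b)) : 'M[C]_a := ptrace2 M.
(* tr_{BC} on A (x) B (x) C, where A (x) B (x) C is indexed by 'I_(a*b*c)
   (= (A (x) B) (x) C), reassociated as A (x) (B (x) C). *)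
Definition trBC (M : 'M[C]_(a * b * c)) : 'M[C]_a :=
  ptrace2 (castmx (esym (mulnA a b c), esym (mulnA a b c)) M : 'M[C]_(a * (b * c))).

Definition idA_tens (U : 'M[C]_(b * c)) : 'M[C]_(a * b * c) :=
  castmx (mulnA a b c, mulnA a b c) ((1%:M : 'M[C]_a) *t U).
Definition tens_idC (L : 'M[C]_(a * b)) : 'M[C]_(a * b * c) :=
  L *t (1%:M : 'M[C]_c).

Fixpoint alg_op (L : 'M[C]_(a * b)) (U : nat -> 'M[C]_(b * c)) (k : nat)
  : 'M[C]_(a * b * c) :=
  match k with
  | 0 => idA_tens (U 0%N)
  | k'.+1 => idA_tens (U k) *m (tens_idC L *m alg_op L U k')
  end.

Definition transformable (L : 'M[C]_(a * b)) (T : nat)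
  (xi tau : 'cV[C]_(a * b * c)) : Prop :=
  exists U : nat -> 'M[C]_(b * c),
    (forall j, (j <= T)%N -> unitary (U j)) /\ alg_op L U T *m xi = tau.
End Alg.
End QDefs.

(* The algorithm's unitaries act on B (x) C only, so they leave tr_BC of the
   state unchanged, while L (x) I_C turns the state rho on A (x) B (the partial
   trace over C) into L rho L^dagger.  Hence the states on A (x) B just before
   each use of L form the required chain pi^j.  Conversely, given a chain,
   purify each pi^j into A (x) B (x) C (possible since dim C >= dim A (x) B)
   and steer the algorithm from one purification to the next: two vectors with
   the same marginal on A differ by a unitary on B (x) C, because X X^* = Y Y^*
   forces X W = Y for some unitary W. *)
From HB Require Import structures.
From mathcomp Require Import all_boot all_order all_algebra.
From mathcomp Require Import complex mxtens reals sesquilinear spectral.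
Import Order.TTheory GRing.Theory Num.Theory Num.Def.
Set Implicit Arguments. Unset Strict Implicit. Unset Printing Implicit Defensive.
Local Open Scope ring_scope.
Local Open Scope sesquilinear_scope.

Section UnitaryFreedom.
Variable C : numClosedFieldType.

Local Notation "B ^!" :=
  (orthomx conjC (mx_of_hermitian (hermitian1mx _)) B) : matrix_set_scope.

Lemma trmxC_mul m n p (A : 'M[C]_(m, n)) (B : 'M[C]_(n, p)) :
  (A *m B)^t* = B^t* *m A^t*.
Proof. by rewrite trmx_mul map_mxM. Qed.

Lemma mulmx_trC_eq0 m n (A : 'M[C]_(m, n)) : A *m A^t* = 0 -> A = 0.
Proof.
move=> AA0; apply/matrixP => i j; rewrite mxE.
have norm_row0 : \sum_k A i k * (A i k)^* = 0.
  transitivity ((A *m A^t*) i i); last by rewrite AA0 mxE.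
  by rewrite mxE; apply: eq_bigr => k _; rewrite !mxE.
have := @psumr_eq0P _ _ _ _ (fun k _ => mul_conjC_ge0 (A i k)) norm_row0 j isT.
by move/eqP; rewrite mul_conjC_eq0 => /eqP.
Qed.

Lemma castmx_unitary m m' n (e : m = m') (A : 'M[C]_(m, n)) :
  A \is unitarymx -> castmx (e, erefl n) A \is unitarymx.
Proof. by case: m' / e; rewrite castmx_id. Qed.

Lemma col_mx_unitary r s d (A : 'M[C]_(r, d)) (B : 'M[C]_(s, d)) :
  A \is unitarymx -> B \is unitarymx -> A *m B^t* = 0 ->
  col_mx A B \is unitarymx.
Proof.
move=> Au Bu AB0; apply/unitarymxP.
rewrite tr_col_mx map_row_mx mul_col_row (unitarymxP Au) (unitarymxP Bu) AB0.
have -> : B *m A^t* = 0 by rewrite -[B]trmxCK -trmxC_mul AB0 trmx0 map_mx0.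
by rewrite -scalar_mx_block.
Qed.

Lemma unitary_orthocompl r d (E : 'M[C]_(r, d)) : E \is unitarymx ->
  exists F : 'M[C]_(d - r, d), F \is unitarymx /\ E *m F^t* = 0.
Proof.
move=> Eu; set F := schmidt (row_base E^!%MS).
have Fu : F \is unitarymx by apply/schmidt_unitarymx/rank_leq_col.
have EF0 : E *m F^t* = 0.
  apply/orthomx1P; rewrite orthomx_sym.
  by rewrite eqmx_schmidt_free ?row_base_free // eq_row_base submx_refl.
have rkF : \rank E^!%MS = (d - r)%N by rewrite rank_ortho mxrank_unitary.
exists (castmx (rkF, erefl d) F); split; first exact: castmx_unitary.
by case: (d - r)%N / rkF; rewrite castmx_id.
Qed.

Lemma unitary_extend r d (E G : 'M[C]_(r, d)) :
  E \is unitarymx -> G \is unitarymx ->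
  exists W : 'M[C]_d, W \is unitarymx /\ E *m W = G.
Proof.
move=> Eu Gu.
have le_rd : (r <= d)%N by rewrite -(mxrank_unitary Eu) rank_leq_col.
have [FE [FEu EFE0]] := unitary_orthocompl Eu.
have [FG [FGu GFG0]] := unitary_orthocompl Gu.
have BEu := col_mx_unitary Eu FEu EFE0.
have BGu := col_mx_unitary Gu FGu GFG0.
exists ((col_mx E FE)^t* *m col_mx G FG); split.
  apply/unitarymxP; rewrite trmxC_mul trmxCK mulmxA.
  rewrite -[_ *m col_mx G FG *m _]mulmxA (unitarymxP BGu) mulmx1.
  by have := mulmxKtV 1%:M BEu (subnKC le_rd); rewrite mul1mx.
rewrite mulmxA tr_col_mx map_row_mx mul_mx_row (unitarymxP Eu) EFE0.
by rewrite mul_row_col mul1mx mul0mx addr0.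
Qed.

Lemma gram_eq_ker k a d (X Y : 'M[C]_(a, d)) (Z : 'M[C]_(k, a)) :
  X *m X^t* = Y *m Y^t* -> Z *m X = 0 -> Z *m Y = 0.
Proof.
move=> XY ZX0; apply: mulmx_trC_eq0.
by rewrite trmxC_mul mulmxA -[Z *m Y *m _]mulmxA -XY mulmxA ZX0 !mul0mx.
Qed.

(* Both X and Y factor through an orthonormal basis E of the row space of X;
   the rows of [Lm *m Y] are then orthonormal as well, and a unitary extension
   of [E |-> Lm *m Y] maps X to Y. *)
Lemma gram_eq_unitary a d (X Y : 'M[C]_(a, d)) : X *m X^t* = Y *m Y^t* ->
  exists W : 'M[C]_d, W \is unitarymx /\ X *m W = Y.
Proof.
move=> XY; set E := schmidt (row_base X).
have Eu : E \is unitarymx by apply/schmidt_unitarymx/rank_leq_col.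
have EX : (E :=: X)%MS :=
  eqmx_trans (eqmx_schmidt_free (row_base_free X)) (eq_row_base X).
have [K KE] : exists K, K *m E = X.
  by exists (X *m pinvmx E); rewrite mulmxKpV // EX.
have [Lm LmX] : exists Lm, Lm *m X = E.
  by exists (E *m pinvmx X); rewrite mulmxKpV // EX.
have Gu : Lm *m Y \is unitarymx.
  apply/unitarymxP; rewrite trmxC_mul mulmxA -[Lm *m Y *m _]mulmxA -XY.
  rewrite mulmxA -[Lm *m X *m X^t* *m _]mulmxA -trmxC_mul LmX.
  exact/unitarymxP.
have KG : K *m (Lm *m Y) = Y.
  have /(gram_eq_ker XY) : (K *m Lm - 1%:M) *m X = 0.
    by rewrite mulmxBl mul1mx -mulmxA LmX KE subrr.
  by rewrite mulmxBl mul1mx mulmxA => /eqP; rewrite subr_eq0 => /eqP.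
have [W [Wu EW]] := unitary_extend Eu Gu.
by exists W; rewrite -KE -mulmxA EW KG.
Qed.

Lemma spectral_diag_ge0 n (P : 'M[C]_n) : P \is normalmx ->
  (forall v : 'cV[C]_n, 0 <= (v^t* *m P *m v) 0 0) ->
  forall i, 0 <= spectral_diag P 0 i.
Proof.
move=> /orthomx_spectralP PE Pge0 i.
set S := spectralmx P in PE *; set sp := spectral_diag P in PE *.
have Su : S \is unitarymx by apply: spectral_unitarymx.
rewrite invmx_unitary // in PE.
have -> : sp 0 i = (S *m P *m S^t*) i i.
  rewrite PE !mulmxA (unitarymxP Su) mul1mx -mulmxA (unitarymxP Su) mulmx1.
  by rewrite mxE eqxx mulr1n.
have := Pge0 ((row i S)^t*); rewrite trmxCK; congr (0 <= _).
rewrite !mxE; apply: eq_bigr => j _; rewrite !mxE; congr (_ * _).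
by apply: eq_bigr => k _; rewrite !mxE.
Qed.

Lemma psd_factor n (P : 'M[C]_n) : P^t* = P ->
  (forall v : 'cV[C]_n, 0 <= (v^t* *m P *m v) 0 0) ->
  exists M : 'M[C]_n, M *m M^t* = P.
Proof.
move=> Ph Pge0; have Pn : P \is normalmx by apply/normalmxP; rewrite Ph.
have sp_ge0 := spectral_diag_ge0 Pn Pge0.
have /orthomx_spectralP := Pn; set S := spectralmx P; set sp := spectral_diag P.
rewrite invmx_unitary ?spectral_unitarymx // => PE.
exists (S^t* *m diag_mx (map_mx sqrtC sp)).
rewrite trmxC_mul trmxCK tr_diag_mx map_diag_mx mulmxA.
rewrite -[_ *m diag_mx _ *m diag_mx _]mulmxA mulmx_diag PE.
congr (_ *m diag_mx _ *m _); apply/rowP => j.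
by rewrite !mxE /= geC0_conj ?sqrtC_ge0 // -expr2 sqrtCK.
Qed.

End UnitaryFreedom.

Lemma big_cast_ord (R : Type) (idx : R) (op : Monoid.com_law idx) m n
    (e : m = n) (F : 'I_n -> R) :
  \big[op/idx]_(l < n) F l = \big[op/idx]_(l < m) F (cast_ord e l).
Proof.
rewrite (reindex (cast_ord e)) //.
by exists (cast_ord (esym e)) => x _; [exact: cast_ordK | exact: cast_ordKV].
Qed.

Lemma big_mxtens_index (R : Type) (idx : R) (op : Monoid.com_law idx) m n
    (F : 'I_(m * n) -> R) :
  \big[op/idx]_(l < m * n) F l =
  \big[op/idx]_(i < m) \big[op/idx]_(k < n) F (mxtens_index (i, k)).
Proof.
rewrite (reindex (@mxtens_index m n)) /=; last first.
  exists (@mxtens_unindex m n) => x _;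
    [exact: mxtens_indexK | exact: mxtens_unindexK].
by rewrite pair_big; apply: eq_bigr => -[i k] _.
Qed.

Section PartialTraces.
Variable R : realType.
Local Notation C := (R[i])%C.
Variables a b c : nat.

Definition trC (M : 'M[C]_(a * b * c)) : 'M[C]_(a * b) := ptrace2 M.

Definition mxA_BC (v : 'cV[C]_(a * b * c)) : 'M[C]_(a, b * c) :=
  \matrix_(i, k) v (cast_ord (mulnA a b c) (mxtens_index (i, k))) 0.

Definition mxAB_C (v : 'cV[C]_(a * b * c)) : 'M[C]_(a * b, c) :=
  \matrix_(i, k) v (mxtens_index (i, k)) 0.

Lemma trBC_ketbra (v : 'cV[C]_(a * b * c)) :
  trBC (ketbra v) = mxA_BC v *m (mxA_BC v)^t*.
Proof.
apply/matrixP => i j; rewrite /trBC /ptrace2 /ketbra /dag !mxE.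
apply: eq_bigr => k _; rewrite castmxE !mxE big_ord1 !mxE.
by congr (v _ 0 * conjC (v _ 0)); apply: val_inj.
Qed.

Lemma trC_ketbra (v : 'cV[C]_(a * b * c)) :
  trC (ketbra v) = mxAB_C v *m (mxAB_C v)^t*.
Proof.
apply/matrixP => i j; rewrite /trC /ptrace2 /ketbra /dag !mxE.
by apply: eq_bigr => k _; rewrite !mxE big_ord1 !mxE.
Qed.

Lemma trBC_trC (M : 'M[C]_(a * b * c)) : trBC M = trB (trC M).
Proof.
apply/matrixP => i j; rewrite /trBC /trB /trC /ptrace2 !mxE big_mxtens_index.
apply: eq_bigr => k _; rewrite mxE; apply: eq_bigr => z _.
rewrite castmxE; congr (M _ _); apply: val_inj;
  by rewrite /= mulnDl -mulnA addnA.
Qed.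

Lemma mxA_BC_inj : injective mxA_BC.
Proof.
move=> v w /matrixP vw; apply/colP => l.
have -> : l = cast_ord (mulnA a b c)
    (mxtens_index (mxtens_unindex (cast_ord (esym (mulnA a b c)) l))).
  by rewrite mxtens_unindexK cast_ordKV.
by case: mxtens_unindex => i k; have := vw i k; rewrite !mxE.
Qed.

Lemma mxAB_C_surj (Z : 'M[C]_(a * b, c)) : exists v, mxAB_C v = Z.
Proof.
exists (\col_l Z (mxtens_unindex l).1 (mxtens_unindex l).2).
by apply/matrixP => i k; rewrite !mxE mxtens_indexK.
Qed.

Lemma mxA_BC_idA_tens (U : 'M[C]_(b * c)) v :
  mxA_BC (idA_tens a U *m v) = mxA_BC v *m U^T.
Proof.
apply/matrixP => i k.
rewrite !mxE (big_cast_ord _ (mulnA a b c)) big_mxtens_index.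
rewrite (bigD1 i) //= [X in _ + X]big1 ?addr0 => [|i' ni'].
  apply: eq_bigr => k' _.
  by rewrite /idA_tens castmxE !cast_ordK tensmxE !mxE eqxx mul1r mulrC.
apply: big1 => k' _; rewrite /idA_tens castmxE !cast_ordK tensmxE mxE.
by rewrite eq_sym (negbTE ni') !mul0r.
Qed.

Lemma mxAB_C_tens_idC (L : 'M[C]_(a * b)) v :
  mxAB_C (tens_idC c L *m v) = L *m mxAB_C v.
Proof.
apply/matrixP => i k; rewrite !mxE big_mxtens_index; apply: eq_bigr => i' _.
rewrite (bigD1 k) //= big1 ?addr0 => [|k' nk'].
  by rewrite /tens_idC tensmxE !mxE eqxx mulr1.
by rewrite /tens_idC tensmxE mxE eq_sym (negbTE nk') mulr0 mul0r.
Qed.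

Lemma trBC_ketbra_idA_tens (U : 'M[C]_(b * c)) v : U \is unitarymx ->
  trBC (ketbra (idA_tens a U *m v)) = trBC (ketbra v).
Proof.
move=> Uu; rewrite !trBC_ketbra mxA_BC_idA_tens trmxC_mul mulmxA.
by rewrite -[_ *m U^T *m _]mulmxA (unitarymxP _) ?mulmx1 ?trmx_unitary.
Qed.

Lemma trC_ketbra_tens_idC (L : 'M[C]_(a * b)) v :
  trC (ketbra (tens_idC c L *m v)) = L *m trC (ketbra v) *m dag L.
Proof. by rewrite !trC_ketbra mxAB_C_tens_idC trmxC_mul !mulmxA. Qed.

Lemma psd_trC_ketbra (v : 'cV[C]_(a * b * c)) : psd (trC (ketbra v)).
Proof.
rewrite trC_ketbra; set Z := mxAB_C v.
split; first by rewrite /dag trmxC_mul trmxCK.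
move=> u; have -> : dag u *m (Z *m Z^t*) *m u = (Z^t* *m u)^t* *m (Z^t* *m u).
  by rewrite trmxC_mul trmxCK !mulmxA.
by rewrite mxE; apply: sumr_ge0 => k _; rewrite !mxE mulrC mul_conjC_ge0.
Qed.

(* For [P = M M^*], the condition [a * b <= c] gives an isometry [E] from
   A (x) B into C, and [M E] is the coefficient matrix of a purification. *)
Lemma trC_ketbra_psd_surj (P : 'M[C]_(a * b)) : (a * b <= c)%N -> psd P ->
  exists v, trC (ketbra v) = P.
Proof.
move=> abc [Ph Pge0]; have [M MM] := psd_factor Ph Pge0.
set E := schmidt (0 : 'M[C]_(a * b, c)).
have Eu : E \is unitarymx by apply: schmidt_unitarymx.
have [v vE] := mxAB_C_surj (M *m E).
exists v; rewrite trC_ketbra vE trmxC_mul mulmxA -[M *m E *m _]mulmxA.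
by rewrite (unitarymxP Eu) mulmx1.
Qed.

Lemma trBC_ketbra_eq (v w : 'cV[C]_(a * b * c)) :
  trBC (ketbra v) = trBC (ketbra w) ->
  exists U, U \is unitarymx /\ idA_tens a U *m v = w.
Proof.
rewrite !trBC_ketbra => /gram_eq_unitary[W [Wu vWw]].
exists W^T; split; first by rewrite trmx_unitary.
by apply: mxA_BC_inj; rewrite mxA_BC_idA_tens trmxK.
Qed.

End PartialTraces.

Section Algorithms.
Variable R : realType.
Local Notation C := (R[i])%C.
Variables (a b c : nat) (L : 'M[C]_(a * b)) (xi : 'cV[C]_(a * b * c)).

Lemma alg_op_eq (U U' : nat -> 'M[C]_(b * c)) k :
  (forall j, (j <= k)%N -> U j = U' j) -> alg_op L U k = alg_op L U' k.
Proof.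
elim: k => [|k IHk] UU' /=; first by rewrite UU'.
by rewrite UU' // IHk // => j le_jk; rewrite UU' // ltnW.
Qed.

Lemma alg_opS_mul (U : nat -> 'M[C]_(b * c)) k :
  alg_op L U k.+1 *m xi =
  idA_tens a (U k.+1) *m (tens_idC c L *m (alg_op L U k *m xi)).
Proof. by rewrite /= !mulmxA. Qed.

Lemma trBC_alg_opS (U : nat -> 'M[C]_(b * c)) k : U k.+1 \is unitarymx ->
  trBC (ketbra (alg_op L U k.+1 *m xi)) =
  trB (L *m trC (ketbra (alg_op L U k *m xi)) *m dag L).
Proof.
move=> Uu; rewrite alg_opS_mul trBC_ketbra_idA_tens //.
by rewrite trBC_trC trC_ketbra_tens_idC.
Qed.

Lemma alg_op_extend (U : nat -> 'M[C]_(b * c)) k v :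
  (forall j, (j <= k)%N -> U j \is unitarymx) ->
  trBC (ketbra v) = trB (L *m trC (ketbra (alg_op L U k *m xi)) *m dag L) ->
  exists U' : nat -> 'M[C]_(b * c),
    (forall j, (j <= k.+1)%N -> U' j \is unitarymx) /\
    alg_op L U' k.+1 *m xi = v.
Proof.
move=> Uu; rewrite -trC_ketbra_tens_idC -trBC_trC => /esym.
move=> /trBC_ketbra_eq[W [Wu Wv]].
exists (fun j => if j == k.+1 then W else U j); split.
  by move=> j; rewrite leq_eqVlt; case: eqP => // _ /Uu.
rewrite alg_opS_mul eqxx (alg_op_eq (U' := U)) // => j le_jk.
by rewrite ltn_eqF.
Qed.

Definition trB_chain T (tau : 'cV[C]_(a * b * c))
    (pi : nat -> 'M[C]_(a * b)) : Prop :=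
  (forall j, (j < T)%N -> psd (pi j)) /\
  (forall j, (j.+1 < T)%N -> trB (pi j.+1) = trB (L *m pi j *m dag L)) /\
  trBC (ketbra xi) = trB (pi 0%N) /\
  trBC (ketbra tau) = trB (L *m pi T.-1 *m dag L).

Lemma transformable_trB_chain T tau : (1 <= T)%N ->
  transformable L T xi tau -> exists pi, trB_chain T tau pi.
Proof.
case: T => // T _ [U [Uu <-]].
exists (fun j => trC (ketbra (alg_op L U j *m xi))).
split; first by move=> j _; apply: psd_trC_ketbra.
split; first by move=> j lt_jT; rewrite -trBC_trC trBC_alg_opS // Uu // ltnW.
split; first by rewrite -trBC_trC /= trBC_ketbra_idA_tens // Uu.
by rewrite trBC_alg_opS // Uu.
Qed.

Lemma trB_chain_reachable T tau pi : (a * b <= c)%N -> trB_chain T tau pi ->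
  forall k, (k < T)%N -> exists U : nat -> 'M[C]_(b * c),
    (forall j, (j <= k)%N -> U j \is unitarymx) /\
    trC (ketbra (alg_op L U k *m xi)) = pi k.
Proof.
move=> abc [pi_psd [pi_step [pi0 _]]]; elim=> [|k IHk] lt_kT.
  have [v piv] := trC_ketbra_psd_surj abc (pi_psd 0%N lt_kT).
  have /trBC_ketbra_eq[W [Wu Wv]] : trBC (ketbra xi) = trBC (ketbra v).
    by rewrite pi0 trBC_trC piv.
  by exists (fun=> W); split => [j|] //=; rewrite Wv.
have [U [Uu Upi]] := IHk (ltnW lt_kT).
have [v piv] := trC_ketbra_psd_surj abc (pi_psd _ lt_kT).
have L_step :
    trBC (ketbra v) = trB (L *m trC (ketbra (alg_op L U k *m xi)) *m dag L).
  by rewrite trBC_trC piv pi_step // Upi.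
have [U' [U'u U'v]] := alg_op_extend Uu L_step.
by exists U'; rewrite U'v.
Qed.

Lemma trB_chain_transformable T tau pi : (a * b <= c)%N -> (1 <= T)%N ->
  trB_chain T tau pi -> transformable L T xi tau.
Proof.
move=> abc; case: T pi => // T pi _ chain.
have [U [Uu Upi]] := trB_chain_reachable abc chain (ltnSn T).
have [_ [_ [_ piT]]] := chain; rewrite /= -Upi in piT.
have [U' [U'u U'tau]] := alg_op_extend Uu piT.
by exists U'.
Qed.

End Algorithms.

Local Open Scope complex_scope.

Theorem proposition1 (R : realType) (a b c : nat) (L : 'M[R[i]]_(a * b))
  (xi tau : 'cV[R[i]]_(a * b * c)) (T : nat) :
  (a * b <= c)%N ->
  subunitary L ->
  xi != 0 ->
  (1 <= T)%N ->
  (transformable L T xi tau <->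
   exists pi : nat -> 'M[R[i]]_(a * b),
     (forall j, (j < T)%N -> psd (pi j)) /\
     (forall j, (j.+1 < T)%N ->
        trB (pi j.+1) = trB (L *m pi j *m dag L)) /\
     trBC (ketbra xi) = trB (pi 0%N) /\
     trBC (ketbra tau) = trB (L *m pi T.-1 *m dag L)).
Proof.
move=> abc _ _ T_gt0; split; first exact: transformable_trB_chain.
by case=> pi; apply: trB_chain_transformable.
Qed.
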